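(* Let $n\in\mathbb{N}$ and $1\le K\le 2^n$. Let $\varphi$ be a uniformly random permutation of $\{0,1\}^{2n}$ among those having exactly $K$ zero pairs. Any quantum algorithm that makes $T$ queries to $\varphi$ and $\varphi^{-1}$ and outputs a zero pair of $\varphi$ with probability $\epsilon>0$ satisfies $$\epsilon\le\frac{8(T+1)^2K}{2^n}.$$
   Context: A zero pair of a permutation $\varphi$ of $\{0,1\}^{2n}$ is a pair $(x,y)\in\{0,1\}^n\times\{0,1\}^n$ with $\varphi(x\|0^n)=y\|0^n$. Queries are to the unitaries $O_\varphi:|a\rangle|b\rangle\mapsto|a\rangle|b\oplus\varphi(a)\rangle$ and $O_{\varphi^{-1}}:|a\rangle|b\rangle\mapsto|a\rangle|b\oplus\varphi^{-1}(a)\rangle$; the success probability is over $\varphi$ and the algorithm's internal randomness and measurements. *)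

From HB Require Import structures.
From mathcomp Require Import all_boot all_order all_fingroup all_algebra.
From mathcomp Require Import spectral.
Set Implicit Arguments. Unset Strict Implicit. Unset Printing Implicit Defensive.
Import Order.TTheory GRing.Theory Num.Theory.
Local Open Scope ring_scope.

Definition bits (k : nat) := (k.-tuple bool).

Definition bxor k (a b : bits k) : bits k := [tuple tnth a i (+) tnth b i | i < k].

Definition pad0 n (x : bits n) : bits (n + n) := [tuple of x ++ nseq n false].

Definition zeros k : bits k := [tuple of nseq k false].

Definition perm2n n := {perm bits (n + n)}.

Definition is_zero_pair n (phi : perm2n n) (xy : bits n * bits n) : bool :=
  phi (pad0 xy.1) == pad0 xy.2.

Definition zero_pairs n (phi : perm2n n) : {set bits n * bits n} :=
  [set xy | is_zero_pair phi xy].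

(* computational basis of the algorithm's register:
   (control bit c, query input a, query output b, workspace w).
   A query with c = false applies O_phi, with c = true applies O_{phi^-1}. *)
Definition basis n m := (bool * bits (n + n) * bits (n + n) * 'I_m.+1)%type.

Definition qdim n m := #|{: basis n m}|.

Definition oracle_map n m (phi : perm2n n) (s : basis n m) : basis n m :=
  let: (c, a, b, w) := s in
  (c, a, bxor b (if c then (phi^-1)%g a else phi a), w).

Definition oracle (C : numClosedFieldType) n m (phi : perm2n n) : 'M[C]_(qdim n m) :=
  \matrix_(i, j) ((enum_val i == oracle_map phi (enum_val j))%:R).

Definition init_state (C : numClosedFieldType) n m : 'cV[C]_(qdim n m) :=
  \col_i ((enum_val i == (false, zeros (n + n), zeros (n + n), ord0))%:R).

Fixpoint run (C : numClosedFieldType) n m (U : nat -> 'M[C]_(qdim n m))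
    (phi : perm2n n) (k : nat) : 'cV[C]_(qdim n m) :=
  match k with
  | 0 => U 0%N *m init_state C n m
  | k'.+1 => U k *m (oracle C m phi *m run U phi k')
  end.

Definition success_prob (C : numClosedFieldType) n m (U : nat -> 'M[C]_(qdim n m))
    (out : basis n m -> bits n * bits n) (T : nat) (phi : perm2n n) : C :=
  \sum_(i | is_zero_pair phi (out (enum_val i))) `|run U phi T i 0| ^+ 2.

Definition perms_K n K : {set perm2n n} := [set phi | #|zero_pairs phi| == K].

Definition avg_success (C : numClosedFieldType) n m (U : nat -> 'M[C]_(qdim n m))
    (out : basis n m -> bits n * bits n) (T K : nat) : C :=
  (\sum_(phi in perms_K n K) success_prob U out T phi) / (#|perms_K n K|)%:R.

From HB Require Import structures.
From mathcomp Require Import all_boot all_order all_fingroup all_algebra.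
From mathcomp Require Import spectral.
From mathcomp Require Import ring zify.
Set Implicit Arguments. Unset Strict Implicit. Unset Printing Implicit Defensive.
Import Order.TTheory GRing.Theory Num.Theory.

(* Write phi = rho o tau, where rho has no zero pair and tau is the involution
   exchanging the padded points pad0 (p i) with rho^-1 (pad0 (q i)) for injective
   K-tuples p and q; then the zero pairs of phi are exactly the (p i, q i), and
   every permutation with K zero pairs arises from the same number of triples
   (rho, p, q), so the average may be taken over these triples instead.
   For fixed rho, the hybrid argument compares the run against phi with the run
   against rho: the success probability is at most twice the weight that the
   final state of rho puts on zero pairs of phi, plus 8T times the weight that
   the T intermediate states put on queries answered differently by phi and rho.
   Both events require tau to move a point determined by the basis state, and
   averaged over (p, q) a fixed point is moved with probability at most K / 2^n,
   which gives (2 + 8 T^2) K / 2^n. *)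

Section HybridArgument.
Variable C : numClosedFieldType.
Local Open Scope ring_scope.
Local Open Scope sesquilinear_scope.

Lemma bxorK k (u : bits k) : involutive (@bxor k ^~ u).
Proof. by move=> b; apply: eq_from_tnth => i; rewrite !tnth_mktuple addbK. Qed.

Lemma oracle_mapK n m (phi : perm2n n) : involutive (@oracle_map n m phi).
Proof. by case=> [[[c a] b] w] /=; rewrite bxorK. Qed.

Definition sqnorm Q (v : 'cV[C]_Q) : C := \sum_i `|v i 0| ^+ 2.

Definition mass Q (P : pred 'I_Q) (v : 'cV[C]_Q) : C := \sum_(i | P i) `|v i 0| ^+ 2.

Lemma massE Q (P : pred 'I_Q) (v : 'cV[C]_Q) :
  mass P v = \sum_i (P i)%:R * `|v i 0| ^+ 2.
Proof. by rewrite /mass big_mkcond; apply: eq_bigr => i _; case: (P i); rewrite ?mul1r ?mul0r. Qed.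

Lemma mass_le_sqnorm Q (P : pred 'I_Q) (v : 'cV[C]_Q) : mass P v <= sqnorm v.
Proof. by rewrite /sqnorm (bigID P) /= lerDl sumr_ge0 // => i _; rewrite exprn_ge0. Qed.

Lemma sqnorm_dotmx Q (v : 'cV[C]_Q) : sqnorm v = (v^t* *m v) 0 0.
Proof. by rewrite mxE; apply: eq_bigr => i _; rewrite !mxE normCK mulrC. Qed.

Lemma sqnorm_unitary Q (U : 'M[C]_Q) (v : 'cV[C]_Q) :
  U \is unitarymx -> sqnorm (U *m v) = sqnorm v.
Proof.
move=> unitU; have UtU : U^t* *m U = 1%:M.
  by have /unitarymxP := trmxC_unitary U; rewrite unitU trmxCK; apply.
by rewrite !sqnorm_dotmx trmx_mul map_mxM mulmxA -(mulmxA _ _ U) UtU mulmx1.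
Qed.

Lemma sqnorm0 Q : sqnorm (0 : 'cV[C]_Q) = 0.
Proof. by rewrite /sqnorm big1 // => i _; rewrite mxE normr0 expr0n. Qed.

(* A weighted parallelogram law: the difference of the two sides is
   [|x - k y|^2]. *)
Lemma normD_sqr_le (k : nat) (x y : C) :
  k%:R * `|x + y| ^+ 2 <= k.+1%:R * `|x| ^+ 2 + (k * k.+1)%:R * `|y| ^+ 2.
Proof.
have -> : k.+1%:R * `|x| ^+ 2 + (k * k.+1)%:R * `|y| ^+ 2 =
    k%:R * `|x + y| ^+ 2 + `|x - k%:R * y| ^+ 2.
  rewrite !normCK !(rmorphD, rmorphN, rmorphM, conjC_nat, natrM) -addn1 natrD /=.
  ring.
by rewrite lerDl exprn_ge0.
Qed.

Lemma normD_sqr_le2 (x y : C) : `|x + y| ^+ 2 <= 2%:R * `|x| ^+ 2 + 2%:R * `|y| ^+ 2.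
Proof. by have := normD_sqr_le 1 x y; rewrite mul1r. Qed.

Lemma sqnormD_le Q (k : nat) (v w : 'cV[C]_Q) :
  k%:R * sqnorm (v + w) <= k.+1%:R * sqnorm v + (k * k.+1)%:R * sqnorm w.
Proof.
rewrite /sqnorm !mulr_sumr -big_split /=; apply: ler_sum => i _.
by rewrite mxE normD_sqr_le.
Qed.

Lemma massD_le Q (P : pred 'I_Q) (v w : 'cV[C]_Q) :
  mass P (v + w) <= 2%:R * mass P v + 2%:R * mass P w.
Proof.
rewrite /mass !mulr_sumr -big_split /=; apply: ler_sum => i _.
by rewrite mxE normD_sqr_le2.
Qed.

Variables n m : nat.
Implicit Types (phi rho : perm2n n) (v : 'cV[C]_(qdim n m)).

Definition oracle_index phi (i : 'I_(qdim n m)) : 'I_(qdim n m) :=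
  enum_rank (oracle_map phi (enum_val i)).

Lemma oracle_indexK phi : involutive (oracle_index phi).
Proof. by move=> i; rewrite /oracle_index enum_rankK oracle_mapK enum_valK. Qed.

Lemma oracle_mulmxE phi v i : (oracle C m phi *m v) i 0 = v (oracle_index phi i) 0.
Proof.
rewrite mxE (bigD1 (oracle_index phi i)) //= big1 => [|j ji].
  by rewrite mxE enum_rankK oracle_mapK eqxx mul1r addr0.
rewrite mxE; case: eqP => [ej|_]; last by rewrite mul0r.
by move: ji; rewrite /oracle_index ej oracle_mapK enum_valK eqxx.
Qed.

Lemma sqnorm_oracle phi v : sqnorm (oracle C m phi *m v) = sqnorm v.
Proof.
rewrite /sqnorm (reindex_inj (can_inj (oracle_indexK phi))) /=.
by apply: eq_bigr => i _; rewrite oracle_mulmxE oracle_indexK.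
Qed.

Lemma sqnorm_init : sqnorm (init_state C n m) = 1.
Proof.
rewrite /sqnorm (bigD1 (enum_rank (false, zeros (n + n), zeros (n + n), ord0))) //=.
rewrite big1 ?addr0 => [|i ni]; first by rewrite mxE enum_rankK eqxx normr1 expr1n.
rewrite mxE; case: eqP => [ei|_]; last by rewrite normr0 expr0n.
by move: ni; rewrite -ei enum_valK eqxx.
Qed.

Variables (U : nat -> 'M[C]_(qdim n m)) (T : nat).
Hypothesis unitU : forall k, (k <= T)%N -> U k \is unitarymx.

Lemma sqnorm_run phi k : (k <= T)%N -> sqnorm (run U phi k) = 1.
Proof.
elim: k => [|k IHk] kT /=; first by rewrite sqnorm_unitary ?unitU // sqnorm_init.
by rewrite sqnorm_unitary ?unitU // sqnorm_oracle IHk // ltnW.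
Qed.

Lemma sqnorm_run_sub_le phi rho k : (k <= T)%N ->
  sqnorm (run U phi k - run U rho k) <=
  k%:R * \sum_(t < k) sqnorm ((oracle C m phi - oracle C m rho) *m run U rho t).
Proof.
elim: k => [|k IHk] kT; first by rewrite subrr sqnorm0 mul0r.
set O := oracle C m.
have -> : run U phi k.+1 - run U rho k.+1 =
    U k.+1 *m (O phi *m (run U phi k - run U rho k) + (O phi - O rho) *m run U rho k).
  by rewrite /= -mulmxBr mulmxBl (mulmxBr (O phi)) addrA subrK mulmxBr.
rewrite sqnorm_unitary ?unitU // big_ord_recr /=.
have {}IHk := IHk (ltnW kT).
have [->|k_gt0] := posnP k; first by rewrite subrr mulmx0 add0r big_ord0 add0r mul1r.
have k_gt0' : (0 : C) < k%:R by rewrite ltr0n.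
rewrite -(ler_pM2l k_gt0'); apply: le_trans (sqnormD_le _ _ _) _.
rewrite sqnorm_oracle.
apply: le_trans (lerD (ler_wpM2l (ler0n _ _) IHk) (lexx _)) _.
rewrite !natrM !mulrDr !mulrA; apply: lerD; last by rewrite mulrC.
by rewrite [k.+1%:R * _]mulrC.
Qed.

Definition query_differs phi rho (i : 'I_(qdim n m)) : bool :=
  let: (c, a, _, _) := enum_val i in
  if c then (phi^-1)%g a != (rho^-1)%g a else phi a != rho a.

Lemma query_differs_oracle phi rho psi i :
  query_differs phi rho (oracle_index psi i) = query_differs phi rho i.
Proof. by rewrite /query_differs /oracle_index enum_rankK; case: (enum_val i) => [[[]]]. Qed.

Lemma oracle_index_eq phi rho i :
  ~~ query_differs phi rho i -> oracle_index phi i = oracle_index rho i.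
Proof.
by rewrite /query_differs /oracle_index; case: (enum_val i) => [[[[] a] b] w] /= /negPn/eqP ->.
Qed.

Lemma oracleB_entry_le phi rho v i :
  let j := oracle_index phi i in let j' := oracle_index rho i in
  `|((oracle C m phi - oracle C m rho) *m v) i 0| ^+ 2 <=
  2%:R * ((query_differs phi rho j)%:R * `|v j 0| ^+ 2) +
  2%:R * ((query_differs phi rho j')%:R * `|v j' 0| ^+ 2).
Proof.
have -> : ((oracle C m phi - oracle C m rho) *m v) i 0 =
    (oracle C m phi *m v) i 0 - (oracle C m rho *m v) i 0 by rewrite mulmxBl !mxE.
rewrite /= !oracle_mulmxE !query_differs_oracle.
have [differs|same] := boolP (query_differs phi rho i).
  by rewrite !mul1r; apply: le_trans (normD_sqr_le2 _ _) _; rewrite normrN.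
by rewrite (oracle_index_eq same) subrr normr0 expr0n /= !mul0r !mulr0 addr0.
Qed.

Lemma sqnorm_oracleB_le phi rho v :
  sqnorm ((oracle C m phi - oracle C m rho) *m v) <= 4%:R * mass (query_differs phi rho) v.
Proof.
apply: le_trans (ler_sum _ (fun i _ => oracleB_entry_le phi rho v i)) _.
rewrite big_split /= -!mulr_sumr massE.
rewrite [X in _ * X + _](reindex_inj (can_inj (oracle_indexK phi))).
rewrite [X in _ + _ * X](reindex_inj (can_inj (oracle_indexK rho))) /=.
under eq_bigr => i _ do rewrite oracle_indexK.
under [X in _ + _ * X]eq_bigr => i _ do rewrite oracle_indexK.
by rewrite -mulrDl -natrD.
Qed.

Definition outputs_zero_pair out phi : pred 'I_(qdim n m) :=
  fun i => is_zero_pair phi (out (enum_val i)).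

Lemma success_prob_le out phi rho :
  success_prob U out T phi <=
  2%:R * mass (outputs_zero_pair out phi) (run U rho T) +
  (8 * T)%:R * \sum_(t < T) mass (query_differs phi rho) (run U rho t).
Proof.
have -> : success_prob U out T phi = mass (outputs_zero_pair out phi) (run U phi T) by [].
have -> : run U phi T = run U rho T + (run U phi T - run U rho T) by rewrite addrC subrK.
apply: le_trans (massD_le _ _ _) _; apply: lerD => //.
have -> : (8 * T)%:R * \sum_(t < T) mass (query_differs phi rho) (run U rho t) =
    2%:R * (T%:R * \sum_(t < T) (4%:R * mass (query_differs phi rho) (run U rho t))).
  by rewrite -mulr_sumr natrM; ring.
apply: ler_wpM2l => //; apply: le_trans (mass_le_sqnorm _ _) _.
apply: le_trans (sqnorm_run_sub_le _ _ (leqnn T)) _.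
by apply: ler_wpM2l => //; apply: ler_sum => t _; apply: sqnorm_oracleB_le.
Qed.

End HybridArgument.

Section Padding.
Variable n : nat.

Definition unpad (a : bits (n + n)) : bits n := [tuple tnth a (lshift n i) | i < n].

Lemma pad0K : cancel (@pad0 n) unpad.
Proof.
move=> x; apply: eq_from_tnth => i; rewrite tnth_mktuple (tnth_nth false) /=.
by rewrite nth_cat size_tuple ltn_ord -tnth_nth.
Qed.

Lemma pad0_inj : injective (@pad0 n).
Proof. exact: can_inj pad0K. Qed.

Definition padded (a : bits (n + n)) : bool := a == pad0 (unpad a).

Lemma padded_pad0 x : padded (pad0 x).
Proof. by rewrite /padded pad0K. Qed.

Lemma unpadK a : padded a -> pad0 (unpad a) = a.
Proof. by move/eqP. Qed.

Lemma card_padded : #|[set a | padded a]| = 2 ^ n.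
Proof.
have -> : [set a | padded a] = @pad0 n @: [set: bits n].
  apply/setP => a; rewrite inE; apply/idP/imsetP => [/unpadK <-|[x _ ->]].
    by exists (unpad a).
  exact: padded_pad0.
by rewrite card_imset ?cardsT ?card_tuple ?card_bool //; apply: pad0_inj.
Qed.

Lemma is_zero_pair_padded (phi : perm2n n) x y :
  is_zero_pair phi (x, y) -> padded (phi (pad0 x)).
Proof. by move=> /eqP ->; apply: padded_pad0. Qed.

Lemma padded_is_zero_pair (phi : perm2n n) x :
  padded (phi (pad0 x)) -> is_zero_pair phi (x, unpad (phi (pad0 x))).
Proof. by []. Qed.

Lemma perms_K0_unpadded (rho : perm2n n) x :
  rho \in perms_K n 0 -> ~~ padded (rho (pad0 x)).
Proof.
rewrite inE cards_eq0 => /eqP rho0; apply/negP => /padded_is_zero_pair zp.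
have : (x, unpad (rho (pad0 x))) \in zero_pairs rho by rewrite inE.
by rewrite rho0 inE.
Qed.

End Padding.

(* The identity when [f] is not injective. *)
Definition perm_of (T : finType) (f : T -> T) : {perm T} :=
  if injectiveP f is ReflectT f_inj then perm f_inj else 1%g.

Lemma perm_ofE (T : finType) (f : T -> T) : injective f -> perm_of f =1 f.
Proof. by move=> f_inj x; rewrite /perm_of; case: injectiveP => // f_inj'; rewrite permE. Qed.

Section Swap.
Variables (T : finType) (K : nat) (a b : 'I_K -> T).

Definition swapf (x : T) : T :=
  if [pick i | a i == x] is Some i then b i
  else if [pick i | b i == x] is Some i then a i else x.

Definition swap_perm : {perm T} := perm_of swapf.

Hypotheses (a_inj : injective a) (b_inj : injective b) (ab_neq : forall i j, a i != b j).

Lemma swapf_l i : swapf (a i) = b i.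
Proof.
rewrite /swapf; case: pickP => [j /eqP /a_inj -> //|].
by move/(_ i); rewrite eqxx.
Qed.

Lemma swapf_r i : swapf (b i) = a i.
Proof.
rewrite /swapf; case: pickP => [j /eqP aj|_]; first by have := ab_neq j i; rewrite aj eqxx.
by case: pickP => [j /eqP /b_inj -> //|]; move/(_ i); rewrite eqxx.
Qed.

Lemma swapf_id x : x \notin codom a -> x \notin codom b -> swapf x = x.
Proof.
move=> xa xb; rewrite /swapf; case: pickP => [i /eqP ai|_].
  by case/negP: xa; rewrite -ai codom_f.
by case: pickP => [i /eqP bi|_] //; case/negP: xb; rewrite -bi codom_f.
Qed.

Lemma swapfK : involutive swapf.
Proof.
move=> x; have [/codomP[i ->]|xa] := boolP (x \in codom a).
  by rewrite swapf_l swapf_r.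
have [/codomP[i ->]|xb] := boolP (x \in codom b); first by rewrite swapf_r swapf_l.
by rewrite !swapf_id.
Qed.

Lemma swap_permE : swap_perm =1 swapf.
Proof. exact/perm_ofE/can_inj/swapfK. Qed.

Lemma swap_permK : (swap_perm * swap_perm)%g = 1%g.
Proof. by apply/permP => x; rewrite permM perm1 !swap_permE swapfK. Qed.

Lemma swap_permV : (swap_perm^-1)%g = swap_perm.
Proof. by rewrite -[LHS]mulg1 -swap_permK mulgA mulVg mul1g. Qed.

End Swap.

Section InjectiveTuples.
Variables (T : finType) (K : nat).

Definition inj_ffuns : {set {ffun 'I_K -> T}} := [set f : {ffun 'I_K -> T} | injectiveb f].

Definition inj_ffuns_hitting (x : T) : {set {ffun 'I_K -> T}} :=
  [set f in inj_ffuns | x \in codom f].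

Lemma card_inj_ffuns_hitting_le x y :
  #|inj_ffuns_hitting x| <= #|inj_ffuns_hitting y|.
Proof.
pose sw (f : {ffun 'I_K -> T}) := [ffun i => tperm x y (f i)].
have swK : involutive sw by move=> f; apply/ffunP => i; rewrite !ffunE tpermK.
rewrite -(card_imset _ (can_inj swK)); apply: subset_leq_card.
apply/subsetP => _ /imsetP[f + ->]; rewrite !inE => /andP[f_inj /codomP[i xfi]].
apply/andP; split; last by apply/codomP; exists i; rewrite ffunE -xfi tpermL.
by apply/injectiveP => j k; rewrite !ffunE => /perm_inj; apply: (injectiveP _ f_inj).
Qed.

Lemma sum_card_inj_ffuns_hitting : \sum_x #|inj_ffuns_hitting x| = K * #|inj_ffuns|.
Proof.
have hit_sum x : #|inj_ffuns_hitting x| = \sum_(f in inj_ffuns) (x \in codom f).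
  rewrite -sum1_card (eq_bigl (fun f : {ffun 'I_K -> T} =>
    (f \in inj_ffuns) && (x \in codom f))) => [|f].
    by rewrite big_mkcondr; apply: eq_bigr => f _; case: (x \in codom f).
  by rewrite inE.
under eq_bigr => x _ do rewrite hit_sum.
rewrite exchange_big /= -sum1_card big_distrr /= muln1; apply: eq_bigr => f.
rewrite inE => /injectiveP f_inj; rewrite -[in RHS](card_ord K) -(card_codom f_inj).
by rewrite -sum1_card [in RHS]big_mkcond; apply: eq_bigr => x _; case: (x \in codom f).
Qed.

(* By symmetry every point is hit by the same number of injections. *)
Lemma card_inj_ffuns_hitting x : #|T| * #|inj_ffuns_hitting x| = K * #|inj_ffuns|.
Proof.
rewrite -sum_card_inj_ffuns_hitting -sum_nat_const; apply: eq_bigr => y _.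
by apply/eqP; rewrite eqn_leq !card_inj_ffuns_hitting_le.
Qed.

End InjectiveTuples.

Section SwapPads.
Variables (n K : nat) (p : {ffun 'I_K -> bits n}) (w : {ffun 'I_K -> bits (n + n)}).

Definition swap_pads : perm2n n := swap_perm (@pad0 n \o p) w.

Hypotheses (p_inj : injective p) (w_inj : injective w) (w_unpadded : forall i, ~~ padded (w i)).

Let pad_p_inj : injective (@pad0 n \o p).
Proof. exact: inj_comp (@pad0_inj n) p_inj. Qed.

Let pad_neq_w i j : pad0 (p i) != w j.
Proof. by apply: contraNneq (w_unpadded j) => <-; apply: padded_pad0. Qed.

Let swap_padsE : swap_pads =1 swapf (@pad0 n \o p) w.
Proof. exact: swap_permE pad_p_inj w_inj pad_neq_w. Qed.

Lemma swap_pads_pad i : swap_pads (pad0 (p i)) = w i.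
Proof. by rewrite swap_padsE; apply: swapf_l. Qed.

Lemma swap_pads_w i : swap_pads (w i) = pad0 (p i).
Proof. by rewrite swap_padsE; apply: swapf_r. Qed.

Lemma swap_pads_id x : x \notin codom p -> swap_pads (pad0 x) = pad0 x.
Proof.
move=> xp; rewrite swap_padsE swapf_id //.
  by apply: contra xp => /codomP[i /= /pad0_inj ->]; apply: codom_f.
by apply/codomP => -[i wi]; have := w_unpadded i; rewrite -wi padded_pad0.
Qed.

Lemma swap_pads_moved a : ~~ padded a -> swap_pads a != a -> a \in codom w.
Proof.
move=> a_unpadded; apply: contraNT => aw; rewrite swap_padsE swapf_id //.
by apply: contra a_unpadded => /codomP[i ->]; apply: padded_pad0.
Qed.

Lemma swap_padsK : (swap_pads * swap_pads)%g = 1%g.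
Proof. exact: swap_permK pad_p_inj w_inj pad_neq_w. Qed.

Lemma swap_padsV : (swap_pads^-1)%g = swap_pads.
Proof. exact: swap_permV pad_p_inj w_inj pad_neq_w. Qed.

End SwapPads.

Section Planting.
Variables (n K : nat) (rho : perm2n n) (p q : {ffun 'I_K -> bits n}).

Definition pad_preimages : {ffun 'I_K -> bits (n + n)} := [ffun i => (rho^-1)%g (pad0 (q i))].

Definition plant : perm2n n := (swap_pads p pad_preimages * rho)%g.

Hypotheses (rho0 : rho \in perms_K n 0) (p_inj : injective p) (q_inj : injective q).

Lemma pad_preimages_inj : injective pad_preimages.
Proof. by move=> i j; rewrite !ffunE => /perm_inj /pad0_inj /q_inj. Qed.

Lemma pad_preimages_unpadded i : ~~ padded (pad_preimages i).
Proof.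
apply/negP => /unpadK ei; have := perms_K0_unpadded (unpad (pad_preimages i)) rho0.
by rewrite ei ffunE permKV padded_pad0.
Qed.

Let tau_pad := swap_pads_pad p_inj pad_preimages_inj pad_preimages_unpadded.
Let tau_fix := swap_pads_id p_inj pad_preimages_inj pad_preimages_unpadded.

Lemma plant_pad j : plant (pad0 (p j)) = pad0 (q j).
Proof. by rewrite permM tau_pad ffunE permKV. Qed.

Lemma plant_unplanted x : x \notin codom p -> plant (pad0 x) = rho (pad0 x).
Proof. by move=> xp; rewrite permM tau_fix. Qed.

Lemma is_zero_pair_plant x y :
  is_zero_pair plant (x, y) = ((x, y) \in [set (p j, q j) | j : 'I_K]).
Proof.
have [/codomP[j ->]|xp] := boolP (x \in codom p).
  rewrite /is_zero_pair /= plant_pad; apply/eqP/imsetP => [/pad0_inj <-|[i _ [/p_inj <- ->]]] //.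
  by exists j.
rewrite /is_zero_pair /= plant_unplanted //; apply/idP/imsetP => [/eqP rho_xy|[i _ [xi _]]].
  by have := perms_K0_unpadded x rho0; rewrite rho_xy padded_pad0.
by case/negP: xp; rewrite xi codom_f.
Qed.

Lemma plant_perms_K : plant \in perms_K n K.
Proof.
rewrite inE; apply/eqP; have -> : zero_pairs plant = [set (p j, q j) | j : 'I_K].
  by apply/setP => -[x y]; rewrite inE is_zero_pair_plant.
by rewrite card_imset ?card_ord // => i j [/p_inj].
Qed.

Lemma zero_pair_plant_moved x y :
  is_zero_pair plant (x, y) -> swap_pads p pad_preimages (pad0 x) != pad0 x.
Proof.
move=> /is_zero_pair_padded; apply: contraTneq; rewrite permM => ->.
exact: perms_K0_unpadded.
Qed.

(* The point whose image under the swap decides whether [plant] and [rho]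
   answer the query [i] differently. *)
Definition query_point m (i : 'I_(qdim n m)) : bits (n + n) :=
  let: (c, a, _, _) := enum_val i in if c then (rho^-1)%g a else a.

Lemma query_differs_plant_moved m (i : 'I_(qdim n m)) :
  query_differs plant rho i ->
  swap_pads p pad_preimages (query_point i) != query_point i.
Proof.
have tauV := swap_padsV p_inj pad_preimages_inj pad_preimages_unpadded.
rewrite /query_differs /query_point; case: (enum_val i) => [[[[] a] _] _] /=.
  by apply: contra => /eqP tau_a; rewrite /plant invMg permM tauV tau_a.
by apply: contra => /eqP tau_a; rewrite /plant permM tau_a.
Qed.

End Planting.

Section MovingPairs.
Variables (n K : nat) (rho : perm2n n).
Hypothesis rho0 : rho \in perms_K n 0.

Local Notation injs := (inj_ffuns (bits n) K).

Definition moving_pairs (b : bits (n + n)) :=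
  [set pq in setX injs injs | swap_pads pq.1 (pad_preimages rho pq.2) b != b].

Lemma card_moving_pairs b : #|{: bits n}| * #|moving_pairs b| <= K * (#|injs| * #|injs|).
Proof.
have [b_padded|b_unpadded] := boolP (padded b).
  have sub : moving_pairs b \subset setX (inj_ffuns_hitting K (unpad b)) injs.
    apply/subsetP => -[p q]; rewrite !inE /= => /andP[/andP[p_inj q_inj] moved].
    rewrite p_inj q_inj andbT /=; apply: contraNT moved => bp.
    have [p_inj' q_inj'] := (injectiveP _ p_inj, injectiveP _ q_inj).
    rewrite -(unpadK b_padded) swap_pads_id //; first exact: pad_preimages_inj.
    exact: pad_preimages_unpadded.
  apply: leq_trans (leq_mul (leqnn _) (subset_leq_card sub)) _.
  by rewrite cardsX mulnA card_inj_ffuns_hitting mulnA.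
have sub : moving_pairs b \subset setX injs (inj_ffuns_hitting K (unpad (rho b))).
  apply/subsetP => -[p q]; rewrite !inE /= => /andP[/andP[p_inj q_inj] moved].
  rewrite p_inj q_inj /=.
  have [p_inj' q_inj'] := (injectiveP _ p_inj, injectiveP _ q_inj).
  have /codomP[i ->] := swap_pads_moved p_inj' (pad_preimages_inj (rho:=rho) q_inj')
    (pad_preimages_unpadded q rho0) b_unpadded moved.
  by rewrite ffunE permKV pad0K codom_f.
apply: leq_trans (leq_mul (leqnn _) (subset_leq_card sub)) _.
by rewrite cardsX mulnCA card_inj_ffuns_hitting mulnCA.
Qed.

End MovingPairs.

Section Fibers.
Variables (n K : nat) (phi : perm2n n).
Hypothesis phiK : phi \in perms_K n K.

Local Notation injs := (inj_ffuns (bits n) K).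

Definition zero_inputs : {set bits n} := [set x | padded (phi (pad0 x))].

Definition free_points : {set bits (n + n)} := [set a | ~~ padded a && ~~ padded (phi a)].

Lemma card_zero_inputs : #|zero_inputs| = K.
Proof.
move: phiK; rewrite inE => /eqP <-.
have -> : zero_inputs = [set xy.1 | xy in zero_pairs phi].
  apply/setP => x; rewrite inE; apply/idP/imsetP => [x0|[[x' y] + ->]].
    by exists (x, unpad (phi (pad0 x))); rewrite ?inE.
  by rewrite inE => /is_zero_pair_padded.
apply: card_in_imset => -[x y] [x' y']; rewrite !inE /is_zero_pair /= => /eqP xy /eqP x'y' ex.
by move: xy; rewrite ex x'y' => /pad0_inj ->.
Qed.

Lemma card_free_points : #|free_points| + 2 * 2 ^ n = 2 ^ (n + n) + K.
Proof.
pose P : {set bits (n + n)} := [set a | padded a].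
pose Q : {set bits (n + n)} := [set a | padded (phi a)].
have cardQ : #|Q| = 2 ^ n.
  by rewrite -card_padded -(card_preimset P (@perm_inj _ phi)); apply: eq_card => a; rewrite !inE.
have cardPQ : #|P :&: Q| = K.
  rewrite -card_zero_inputs -(card_imset _ (@pad0_inj n)); apply: eq_card => a.
  rewrite !inE; apply/andP/imsetP => [[/unpadK a_pad phi_a]|[x + ->]].
    by exists (unpad a); rewrite ?inE a_pad.
  by rewrite inE padded_pad0.
have -> : free_points = ~: (P :|: Q) by apply/setP => a; rewrite !inE negb_or.
have cardT : #|{: bits (n + n)}| = 2 ^ (n + n) by rewrite card_tuple card_bool.
rewrite -cardT -(cardsC (P :|: Q)) -cardPQ mul2n -addnn -{1}card_padded -cardQ -/P.
rewrite -(cardsUI P Q); lia.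
Qed.

Definition plant_triples := setX (perms_K n 0) (setX injs injs).

Definition fiber := [set t in plant_triples | plant t.1 t.2.1 t.2.2 == phi].

Definition swap_data :=
  setX [set p : {ffun 'I_K -> bits n} in ffun_on zero_inputs | injectiveb p]
       [set w : {ffun 'I_K -> bits (n + n)} in ffun_on free_points | injectiveb w].

Definition fiber_to_swap_data (t : perm2n n * ({ffun 'I_K -> bits n} * {ffun 'I_K -> bits n})) :=
  (t.2.1, pad_preimages t.1 t.2.2).

Definition swap_data_to_fiber (d : {ffun 'I_K -> bits n} * {ffun 'I_K -> bits (n + n)}) :=
  ((swap_pads d.1 d.2 * phi)%g, (d.1, [ffun k => unpad (phi (pad0 (d.1 k)))])).

Lemma card_swap_data : #|swap_data| = K ^_ K * #|free_points| ^_ K.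
Proof. by rewrite cardsX !card_inj_ffuns_on card_ord card_zero_inputs. Qed.

Lemma fiber_to_swap_dataK : {in fiber, forall t,
  fiber_to_swap_data t \in swap_data /\ swap_data_to_fiber (fiber_to_swap_data t) = t}.
Proof.
move=> [rho [p q]]; rewrite !inE /= => /andP[/andP[rho0 /andP[p_inj q_inj]] /eqP planted].
have {}rho0 : rho \in perms_K n 0 by rewrite inE.
have [p_inj' q_inj'] := (injectiveP _ p_inj, injectiveP _ q_inj).
have w_inj := pad_preimages_inj (rho:=rho) q_inj'.
have w_unpadded := pad_preimages_unpadded q rho0.
split.
  rewrite p_inj (introT (injectiveP _) w_inj) !andbT; apply/andP; split.
    by apply/forallP => j; rewrite inE -planted plant_pad // padded_pad0.
  apply/forallP => j; rewrite inE w_unpadded /= -planted permM swap_pads_w //.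
  exact: perms_K0_unpadded.
rewrite /swap_data_to_fiber /= -planted mulgA swap_padsK // mul1g; congr (_, (_, _)).
by apply/ffunP => j; rewrite ffunE plant_pad // pad0K.
Qed.

Section FromSwapData.
Variables (p : {ffun 'I_K -> bits n}) (w : {ffun 'I_K -> bits (n + n)}).
Hypotheses (p_zero : p \in ffun_on zero_inputs) (p_inj : injective p).
Hypotheses (w_free : w \in ffun_on free_points) (w_inj : injective w).

Let p_padded j : padded (phi (pad0 (p j))).
Proof. by have /ffun_onP/(_ j) := p_zero; rewrite inE. Qed.

Let w_unpadded j : ~~ padded (w j).
Proof. by have /ffun_onP/(_ j) := w_free; rewrite inE => /andP[]. Qed.

Let phi_w_unpadded j : ~~ padded (phi (w j)).
Proof. by have /ffun_onP/(_ j) := w_free; rewrite inE => /andP[]. Qed.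

Lemma codom_zero_inputs : codom p =i zero_inputs.
Proof.
apply/subset_cardP; last by apply/subsetP => _ /codomP[j ->]; rewrite inE.
by rewrite card_zero_inputs (card_codom p_inj) card_ord.
Qed.

Lemma swap_data_perms_K0 : (swap_pads p w * phi)%g \in perms_K n 0.
Proof.
rewrite inE cards_eq0; apply/eqP/setP => -[x y]; rewrite !inE; apply/negP.
move=> /is_zero_pair_padded; rewrite permM.
have [/codomP[j ->]|xp] := boolP (x \in codom p).
  by rewrite swap_pads_pad // (negbTE (phi_w_unpadded j)).
by rewrite swap_pads_id // => phi_x; case/negP: xp; rewrite codom_zero_inputs inE.
Qed.

Lemma swap_data_to_fiberK :
  swap_data_to_fiber (p, w) \in fiber /\ fiber_to_swap_data (swap_data_to_fiber (p, w)) = (p, w).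
Proof.
set rho := (swap_pads p w * phi)%g.
set q : {ffun 'I_K -> bits n} := [ffun k => unpad (phi (pad0 (p k)))].
have q_inj : injective q.
  move=> i j; rewrite !ffunE => /(congr1 (@pad0 n)); rewrite !(unpadK (p_padded _)).
  by move/perm_inj/pad0_inj/p_inj.
have preimages_w : pad_preimages rho q = w.
  apply/ffunP => j; rewrite !ffunE (unpadK (p_padded j)) /rho invMg permM permK.
  by rewrite swap_padsV // swap_pads_pad.
split; last by rewrite /fiber_to_swap_data /= preimages_w.
rewrite inE /plant preimages_w mulgA swap_padsK // mul1g eqxx andbT !in_setX.
by rewrite swap_data_perms_K0 !inE /=; apply/andP; split; apply/injectiveP.
Qed.

End FromSwapData.

Lemma card_fiber : #|fiber| = K ^_ K * #|free_points| ^_ K.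
Proof.
rewrite -card_swap_data -(card_in_imset (f := fiber_to_swap_data)) => [|t t' tF t'F eq_tt'].
  apply: eq_card => d; apply/imsetP/idP => [[t tF ->]|].
    exact: (fiber_to_swap_dataK tF).1.
  case: d => p w; rewrite inE => /andP[]; rewrite !inE => /andP[p_zero p_inj] /andP[w_free w_inj].
  have [dF dK] := swap_data_to_fiberK p_zero (injectiveP _ p_inj) w_free (injectiveP _ w_inj).
  by exists (swap_data_to_fiber (p, w)).
by rewrite -(fiber_to_swap_dataK tF).2 -(fiber_to_swap_dataK t'F).2 eq_tt'.
Qed.

End Fibers.

(* [2 ^ (n + n) + K - 2 * 2 ^ n] counts the points that are neither padded nor
   sent to a padded point ([card_free_points]). *)
Definition fiber_size n K := K ^_ K * (2 ^ (n + n) + K - 2 * 2 ^ n) ^_ K.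

Lemma fiber_size_gt0 n K : 0 < n -> 0 < fiber_size n K.
Proof.
move=> n_gt0; rewrite muln_gt0 !ffact_gt0 leqnn /= expnD.
have : 2 <= 2 ^ n by rewrite -{1}(expn1 2) leq_pexp2l.
nia.
Qed.

Section Averaging.
Variable C : numClosedFieldType.
Local Open Scope ring_scope.

Lemma sum_setX (I J : finType) (A : {set I}) (B : {set J}) (F : I * J -> C) :
  \sum_(t in setX A B) F t = \sum_(a in A) \sum_(b in B) F (a, b).
Proof. by rewrite pair_big; apply: eq_big => [[a b]|[a b] _] //=; rewrite in_setX. Qed.

Lemma sum_mass_le (I : finType) (A : {set I}) Q (P : I -> pred 'I_Q) (v : 'cV[C]_Q) (c : C) :
  (forall i, \sum_(a in A) ((P a i)%:R : C) <= c) -> \sum_(a in A) mass (P a) v <= c * sqnorm v.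
Proof.
move=> Pc; under eq_bigr => a _ do rewrite massE.
rewrite exchange_big /= /sqnorm mulr_sumr; apply: ler_sum => i _.
by rewrite -mulr_suml ler_wpM2r ?exprn_ge0.
Qed.

Lemma ler_divr_nat (s x : C) (k : nat) : 0 <= x -> s <= k%:R * x -> s / k%:R <= x.
Proof.
move=> x_ge0 s_le; have [->|k_gt0] := posnP k; first by rewrite invr0 mulr0.
by rewrite ler_pdivrMr ?ltr0n // mulrC.
Qed.

Lemma sum_plant_triples n K (f : perm2n n -> C) :
  \sum_(t in plant_triples n K) f (plant t.1 t.2.1 t.2.2) =
  (fiber_size n K)%:R * \sum_(phi in perms_K n K) f phi.
Proof.
rewrite (partition_big (fun t => plant t.1 t.2.1 t.2.2) (mem (perms_K n K))) => [|[rho [p q]]].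
  rewrite mulr_sumr; apply: eq_bigr => phi phiK.
  rewrite (eq_bigl (fun t => t \in fiber K phi)) => [|t]; last by rewrite /fiber inE.
  rewrite (eq_bigr (fun=> f phi)) => [|t]; last by rewrite /fiber inE => /andP[_ /eqP ->].
  rewrite sumr_const card_fiber // mulr_natl /fiber_size.
  by rewrite -(card_free_points phiK) addnK.
rewrite !in_setX /= => /andP[rho0 /andP[p_inj q_inj]].
by apply: (plant_perms_K rho0); apply/injectiveP; [move: p_inj | move: q_inj]; rewrite inE.
Qed.

Section FixedRho.
Variables (n K : nat) (rho : perm2n n).
Hypothesis rho0 : rho \in perms_K n 0.

Local Notation injs := (inj_ffuns (bits n) K).

Lemma sum_moving_le b (P : pred ({ffun 'I_K -> bits n} * {ffun 'I_K -> bits n})) :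
  {in setX injs injs, forall pq, P pq -> swap_pads pq.1 (pad_preimages rho pq.2) b != b} ->
  \sum_(pq in setX injs injs) ((P pq)%:R : C) <= K%:R / (2 ^ n)%:R * #|setX injs injs|%:R.
Proof.
move=> P_moving.
have sum_le : (\sum_(pq in setX injs injs) P pq <= #|moving_pairs K rho b|)%N.
  rewrite -sum1_card [X in (_ <= X)%N](eq_bigl (fun pq => (pq \in setX injs injs) &&
    (swap_pads pq.1 (pad_preimages rho pq.2) b != b))) => [|pq]; last by rewrite inE.
  rewrite big_mkcondr /=; apply: leq_sum => pq pqA.
  by case: (boolP (P pq)) => // /(P_moving _ pqA) ->.
have := card_moving_pairs K rho0 b; rewrite card_tuple card_bool -cardsX.
rewrite -natr_sum mulrAC ler_pdivlMr ?ltr0n ?expn_gt0 // -!natrM ler_nat mulnC.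
by apply: leq_trans; rewrite leq_mul2r sum_le orbT.
Qed.

Variables (m : nat) (U : nat -> 'M[C]_(qdim n m)) (out : basis n m -> bits n * bits n) (T : nat).
Hypothesis unitU : forall k, (k <= T)%N -> U k \is unitarymx.

Lemma sum_success_prob_plant_le :
  \sum_(pq in setX injs injs) success_prob U out T (plant rho pq.1 pq.2) <=
  #|setX injs injs|%:R * (((2 + 8 * T * T) * K)%:R / (2 ^ n)%:R).
Proof.
set A := setX injs injs; pose c : C := K%:R / (2 ^ n)%:R * #|A|%:R.
have move_bound t (P : _ -> pred 'I_(qdim n m)) (point : 'I_(qdim n m) -> bits (n + n)) :
    (t <= T)%N ->
    (forall pq i, pq \in A -> P pq i ->
       swap_pads pq.1 (pad_preimages rho pq.2) (point i) != point i) ->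
    \sum_(pq in A) mass (P pq) (run U rho t) <= c.
  move=> tT moved; rewrite -[c]mulr1 -(sqnorm_run unitU rho tT).
  by apply: sum_mass_le => i; apply: sum_moving_le => pq pqA; apply: moved.
apply: le_trans (ler_sum _ (fun pq _ =>
  success_prob_le unitU out (plant rho pq.1 pq.2) rho)) _.
rewrite big_split /= -!mulr_sumr.
have zero_pairs_le :
    \sum_(pq in A) mass (outputs_zero_pair out (plant rho pq.1 pq.2)) (run U rho T) <= c.
  apply: (move_bound _ _ (fun i => pad0 (out (enum_val i)).1)) => // -[p q] i.
  rewrite in_setX !inE => /andP[/injectiveP p_inj /injectiveP q_inj].
  by rewrite /outputs_zero_pair [out _]surjective_pairing; apply: zero_pair_plant_moved.
have differs_le : \sum_(pq in A) \sum_(t < T)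
    mass (query_differs (plant rho pq.1 pq.2) rho) (run U rho t) <= T%:R * c.
  rewrite exchange_big /=; apply: le_trans (_ : _ <= \sum_(t < T) c) _; last first.
    by rewrite sumr_const card_ord mulr_natl.
  apply: ler_sum => t _; apply: (move_bound _ _ (query_point rho (m:=m))) => [|[p q] i].
    exact: ltnW.
  rewrite in_setX !inE => /andP[/injectiveP p_inj /injectiveP q_inj].
  exact: query_differs_plant_moved.
suff -> : #|A|%:R * (((2 + 8 * T * T) * K)%:R / (2 ^ n)%:R) =
    2%:R * c + (8 * T)%:R * (T%:R * c) :> C.
  exact: lerD (ler_wpM2l (ler0n _ _) zero_pairs_le) (ler_wpM2l (ler0n _ _) differs_le).
by rewrite /c !natrM; ring.
Qed.

End FixedRho.

Section AverageSuccess.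
Variables (n m K T : nat) (U : nat -> 'M[C]_(qdim n m)) (out : basis n m -> bits n * bits n).
Hypothesis unitU : forall k, (k <= T)%N -> U k \is unitarymx.

Lemma avg_success_le1 : avg_success U out T K <= 1.
Proof.
apply: ler_divr_nat => //; rewrite mulr1 -sum1_card natr_sum; apply: ler_sum => phi _.
rewrite -(sqnorm_run unitU phi (leqnn T)); exact: mass_le_sqnorm.
Qed.

Lemma avg_success_plant : (0 < n)%N ->
  avg_success U out T K = (\sum_(t in plant_triples n K) success_prob U out T
    (plant t.1 t.2.1 t.2.2)) / #|plant_triples n K|%:R.
Proof.
move=> n_gt0; have := sum_plant_triples K (fun _ : perm2n n => 1 : C); rewrite !sumr_const => ->.
rewrite /avg_success sum_plant_triples invfM mulrACA.
by rewrite divff ?mul1r // pnatr_eq0 -lt0n fiber_size_gt0.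
Qed.

Lemma sum_plant_triples_le :
  \sum_(t in plant_triples n K) success_prob U out T (plant t.1 t.2.1 t.2.2) <=
  #|plant_triples n K|%:R * (((2 + 8 * T * T) * K)%:R / (2 ^ n)%:R).
Proof.
rewrite sum_setX cardsX natrM -mulrA mulr_natl -sumr_const; apply: ler_sum => rho rho0.
exact: sum_success_prob_plant_le.
Qed.

End AverageSuccess.

End Averaging.

Local Open Scope ring_scope.

Theorem lemma4 (C : numClosedFieldType) (n K T m : nat)
  (U : nat -> 'M[C]_(qdim n m)) (out : basis n m -> bits n * bits n) (eps : C) :
  (1 <= K)%N -> (K <= 2 ^ n)%N ->
  (forall k, (k <= T)%N -> U k \is unitarymx) ->
  eps = avg_success U out T K -> 0 < eps ->
  eps <= (8 * T.+1 ^ 2 * K)%:R / (2 ^ n)%:R.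
Proof.
move=> K_gt0 _ unitU -> _.
(* For [n = 0] no permutation is free of zero pairs, but the bound is [>= 1]. *)
have [n0|n_gt0] := posnP n.
  apply: le_trans (avg_success_le1 K out unitU) _.
  by rewrite n0 expn0 divr1 ler1n !muln_gt0 K_gt0.
rewrite avg_success_plant //; apply: ler_divr_nat; first by rewrite divr_ge0.
apply: le_trans (sum_plant_triples_le K out unitU) _.
by rewrite ler_wpM2l // ler_wpM2r ?invr_ge0 // ler_nat; nia.
Qed.
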